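(* For any integers $1\le L\le K\le n$ and any $\epsilon\in(0,1]$, there is an $\epsilon$-net $\mathscr Y(\epsilon,n,K,L)$ of $\mathcal N(n,K,L)$ in Frobenius norm whose cardinality satisfies $$\ln|\mathscr Y(\epsilon,n,K,L)|\le n\ln K+K\ln L+(K^2+2nL)\ln\Big(\frac{9nL}{\epsilon}\Big).$$
   Context: Nested Block Model class: for integers $1\le L\le K\le n$, $\mathcal N(n,K,L)$ is the set of matrices $P\in[0,1]^{n\times n}$ for which there exist a clustering function $z:\{1,\dots,n\}\to\{1,\dots,K\}$ (communities), a clustering function $c:\{1,\dots,K\}\to\{1,\dots,L\}$ (meta-communities), a matrix $B\in[0,1]^{K\times K}$ and a matrix $H\in\mathbb R_+^{n\times L}$ such that, with $n_k=\#\{i:z(i)=k\}$, $$\sum_{i:\,z(i)=k}H_{i,l}=n_k\quad\text{for all }k\le K,\ l\le L,$$ and $$P_{ij}=B_{z(i),z(j)}\,H_{i,c(z(j))}\,H_{j,c(z(i))}\quad\text{for all }i,j.$$ An $\epsilon$-net of a set $\mathcal S$ of matrices in Frobenius norm is a finite set $\mathcal Y$ such that for every $S\in\mathcal S$ there is $Y\in\mathcal Y$ with $\|S-Y\|_F\le\epsilon$. *)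

From Stdlib Require Import Reals List Arith.
Import ListNotations.
Open Scope R_scope.

(* n x n real matrices are represented as functions nat -> nat -> R;
   only the entries with indices i, j < n are relevant (0-based indices). *)
Definition mat := nat -> nat -> R.

Definition rsum (n : nat) (f : nat -> R) : R :=
  fold_right Rplus 0 (map f (seq 0 n)).

Definition frob_dist (n : nat) (A B : mat) : R :=
  sqrt (rsum n (fun i => rsum n (fun j => (A i j - B i j) ^ 2))).

Definition csize (n : nat) (z : nat -> nat) (k : nat) : R :=
  INR (length (filter (fun i => Nat.eqb (z i) k) (seq 0 n))).

(* Nested Block Model class N(n,K,L), with communities 0..K-1 and
   meta-communities 0..L-1. *)
Definition NBM (n K L : nat) (P : mat) : Prop :=
  (forall i j, (i < n)%nat -> (j < n)%nat -> 0 <= P i j <= 1) /\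
  exists (z : nat -> nat) (c : nat -> nat) (B : mat) (H : mat),
    (forall i, (i < n)%nat -> (z i < K)%nat) /\
    (forall k, (k < K)%nat -> (c k < L)%nat) /\
    (forall k l, (k < K)%nat -> (l < K)%nat -> 0 <= B k l <= 1) /\
    (forall i l, (i < n)%nat -> (l < L)%nat -> 0 <= H i l) /\
    (forall k l, (k < K)%nat -> (l < L)%nat ->
        rsum n (fun i => if Nat.eqb (z i) k then H i l else 0) = csize n z k) /\
    (forall i j, (i < n)%nat -> (j < n)%nat ->
        P i j = B (z i) (z j) * H i (c (z j)) * H j (c (z i))).

Definition is_eps_net (n : nat) (eps : R) (S : mat -> Prop) (Y : list mat) : Prop :=
  forall P, S P -> exists M, In M Y /\ frob_dist n P M <= eps.

(* Rescale each column block of H by its maximum over the community and move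
   the scale factors into B: the rescaled B is then an entry of P, so every
   parameter lies in [0, 1].  Rounding all K^2 + nL parameters to the grid of
   mesh 1/m changes each entry of P = B H H by at most 3/m, hence P by at most
   3n/m <= eps in Frobenius norm.  Counting the labellings z, c and the grid
   points, and taking m + 1 <= 9nL/eps, gives the bound. *)
From Stdlib Require Import Reals List Arith.
From Stdlib Require Import Lia Lra Psatz.
Import ListNotations.
Open Scope R_scope.

(* All functions on [0, d) with values in [vals], extended by [dflt] beyond d. *)
Fixpoint all_funs {A : Type} (d : nat) (vals : list A) (dflt : A) : list (nat -> A) :=
  match d with
  | O => [fun _ => dflt]
  | S d' => flat_map (fun f => map (fun v i => if Nat.eqb i d' then v else f i) vals)
              (all_funs d' vals dflt)
  end.

Lemma length_flat_map_const {A B : Type} (f : A -> list B) (l : list A) (c : nat) :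
  (forall x, length (f x) = c) -> length (flat_map f l) = (length l * c)%nat.
Proof. intros Hf; induction l; simpl; auto. rewrite length_app, Hf, IHl. reflexivity. Qed.

Lemma length_all_funs {A : Type} (d : nat) (vals : list A) (dflt : A) :
  length (all_funs d vals dflt) = (length vals ^ d)%nat.
Proof.
  induction d; simpl; auto.
  rewrite (length_flat_map_const _ _ (length vals)).
  - rewrite IHd. apply Nat.mul_comm.
  - intros; apply length_map.
Qed.

Lemma all_funs_complete {A : Type} (d : nat) (vals : list A) (dflt : A)
    (Rel : nat -> A -> Prop) :
  (forall i, (i < d)%nat -> exists v, In v vals /\ Rel i v) ->
  exists g, In g (all_funs d vals dflt) /\ forall i, (i < d)%nat -> Rel i (g i).
Proof.
  induction d; intros Hex.
  - exists (fun _ => dflt); split; [left; auto | intros; lia].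
  - destruct IHd as [g [Hg HR]]; [intros; apply Hex; lia|].
    destruct (Hex d ltac:(lia)) as [v [Hv Rv]].
    exists (fun i => if Nat.eqb i d then v else g i). split.
    + simpl. apply in_flat_map. exists g. split; auto. apply in_map_iff. exists v; auto.
    + intros i Hi. destruct (Nat.eqb_spec i d); [subst; auto | apply HR; lia].
Qed.

Lemma div_mod_pair (a b q : nat) : (b < q)%nat -> ((a * q + b) / q = a /\ (a * q + b) mod q = b)%nat.
Proof.
  intros Hb. split.
  - symmetry. apply (Nat.div_unique _ _ _ b); lia.
  - symmetry. apply (Nat.mod_unique _ _ a); lia.
Qed.

Lemma fold_Rmax_ge (l : list R) (x : R) : In x l -> x <= fold_right Rmax 0 l.
Proof.
  induction l; simpl; [tauto|]. intros [<-|Hx]; [apply Rmax_l|].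
  eapply Rle_trans; [apply IHl; auto | apply Rmax_r].
Qed.

Lemma fold_Rmax_nonneg (l : list R) : 0 <= fold_right Rmax 0 l.
Proof. induction l; simpl; [lra|]. eapply Rle_trans; [apply IHl | apply Rmax_r]. Qed.

Lemma fold_Rmax_attained (l : list R) :
  fold_right Rmax 0 l = 0 \/ In (fold_right Rmax 0 l) l.
Proof.
  induction l; simpl; auto.
  destruct (Rle_dec a (fold_right Rmax 0 l)).
  - rewrite Rmax_right by auto. destruct IHl; auto.
  - rewrite Rmax_left by lra. auto.
Qed.

Lemma nat_floor_bracket (m : nat) (t : R) :
  0 <= t <= INR m -> exists j, (j <= m)%nat /\ INR j <= t <= INR j + 1.
Proof.
  revert t; induction m; intros t Ht.
  - exists 0%nat. simpl in *. split; [lia|lra].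
  - destruct (Rle_dec t (INR m)).
    + destruct (IHm t) as [j [Hj Hj']]; [lra|]. exists j; split; auto.
    + exists m. rewrite S_INR in Ht. split; [lia|lra].
Qed.

Lemma ln_le_compat (x y : R) : 0 < x -> x <= y -> ln x <= ln y.
Proof. intros Hx [Hxy | <-]; [left; apply ln_increasing; auto | lra]. Qed.

Lemma Rabs_mul3_sub_le (a b c a' b' c' d : R) :
  0 <= a <= 1 -> 0 <= b <= 1 -> 0 <= c <= 1 ->
  0 <= a' <= 1 -> 0 <= b' <= 1 -> 0 <= c' <= 1 ->
  Rabs (a - a') <= d -> Rabs (b - b') <= d -> Rabs (c - c') <= d ->
  Rabs (a * b * c - a' * b' * c') <= 3 * d.
Proof.
  intros.
  replace (a * b * c - a' * b' * c')
    with ((a - a') * (b * c) + (a' * ((b - b') * c) + a' * b' * (c - c'))) by ring.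
  eapply Rle_trans; [apply Rabs_triang|].
  eapply Rle_trans; [apply Rplus_le_compat; [apply Rle_refl | apply Rabs_triang]|].
  rewrite !Rabs_mult, (Rabs_right b), (Rabs_right c), (Rabs_right a'), (Rabs_right b') by lra.
  pose proof (Rabs_pos (a - a')). pose proof (Rabs_pos (b - b')). pose proof (Rabs_pos (c - c')).
  assert (Rabs (a - a') * (b * c) <= d) by (assert (b * c <= 1) by nra; nra).
  assert (a' * (Rabs (b - b') * c) <= d) by (assert (a' * c <= 1) by nra; nra).
  assert (a' * b' * Rabs (c - c') <= d) by (assert (a' * b' <= 1) by nra; nra).
  lra.
Qed.

Lemma rsum_le (n : nat) (f g : nat -> R) :
  (forall i, (i < n)%nat -> f i <= g i) -> rsum n f <= rsum n g.
Proof.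
  unfold rsum. intros Hfg.
  assert (Hin : forall i, In i (seq 0 n) -> f i <= g i)
    by (intros i Hi; apply in_seq in Hi; apply Hfg; lia).
  induction (seq 0 n); simpl; [lra|].
  apply Rplus_le_compat; [apply Hin; left | apply IHl; intros; apply Hin; right]; auto.
Qed.

Lemma rsum_const (n : nat) (c : R) : rsum n (fun _ => c) = INR n * c.
Proof.
  unfold rsum. rewrite <- (length_seq n 0) at 2.
  induction (seq 0 n); simpl length; [simpl; ring|]. rewrite S_INR; simpl; rewrite IHl; ring.
Qed.

Lemma frob_dist_le_entrywise (n : nat) (A B : mat) (d : R) : 0 <= d ->
  (forall i j, (i < n)%nat -> (j < n)%nat -> Rabs (A i j - B i j) <= d) ->
  frob_dist n A B <= INR n * d.
Proof.
  intros Hd Hent. unfold frob_dist.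
  eapply Rle_trans.
  { apply sqrt_le_1_alt. apply rsum_le. intros i Hi. apply rsum_le. intros j Hj.
    rewrite <- pow2_abs. apply pow_incr. split; [apply Rabs_pos | apply Hent; auto]. }
  rewrite !rsum_const.
  replace (INR n * (INR n * d ^ 2)) with ((INR n * d) ^ 2) by ring.
  rewrite sqrt_pow2; [lra | apply Rmult_le_pos; [apply pos_INR | exact Hd]].
Qed.

Definition grid (m : nat) : list R := map (fun j => INR j / INR m) (seq 0 (S m)).

Lemma length_grid (m : nat) : length (grid m) = S m.
Proof. unfold grid. rewrite length_map, length_seq. reflexivity. Qed.

Lemma grid_approx (m : nat) (x : R) : (0 < m)%nat -> 0 <= x <= 1 ->
  exists v, In v (grid m) /\ (0 <= v <= 1 /\ Rabs (v - x) <= / INR m).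
Proof.
  intros Hm Hx. assert (Hm' : 0 < INR m) by (apply lt_0_INR; auto).
  destruct (nat_floor_bracket m (x * INR m)) as [j [Hj [H1 H2]]]; [split; nra|].
  exists (INR j / INR m). split.
  { apply in_map_iff. exists j. split; auto. apply in_seq; lia. }
  assert (INR j <= INR m) by (apply le_INR; auto).
  pose proof (pos_INR j).
  set (w := / INR m).
  assert (Hw : INR m * w = 1) by (unfold w; field; lra).
  assert (Hw0 : 0 < w) by (unfold w; apply Rinv_0_lt_compat; lra).
  unfold Rdiv. fold w.
  assert (x = x * INR m * w) by (rewrite Rmult_assoc, Hw; ring).
  split; [split; nra|]. apply Rabs_le. split; nra.
Qed.

Section BlockMax.

Variables (n : nat) (z : nat -> nat) (H : mat).

Definition block_max (k l : nat) : R :=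
  fold_right Rmax 0 (map (fun i => if Nat.eqb (z i) k then H i l else 0) (seq 0 n)).

Lemma block_max_ge (i l : nat) : (i < n)%nat -> H i l <= block_max (z i) l.
Proof.
  intros Hi. apply fold_Rmax_ge, in_map_iff. exists i.
  rewrite Nat.eqb_refl. split; auto. apply in_seq; lia.
Qed.

Lemma block_max_nonneg (k l : nat) : 0 <= block_max k l.
Proof. apply fold_Rmax_nonneg. Qed.

Lemma block_max_attained (k l : nat) :
  block_max k l = 0 \/ exists i, (i < n)%nat /\ z i = k /\ H i l = block_max k l.
Proof.
  destruct (fold_Rmax_attained
              (map (fun i => if Nat.eqb (z i) k then H i l else 0) (seq 0 n))) as [E|E];
    [left; exact E|].
  apply in_map_iff in E. destruct E as [i [Ei Hi]]. apply in_seq in Hi.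
  destruct (Nat.eqb_spec (z i) k).
  - right. exists i. repeat split; auto; lia.
  - left. unfold block_max. rewrite <- Ei. reflexivity.
Qed.

End BlockMax.

Definition normalized_factorization (n K L : nat) (P : mat) (z c : nat -> nat) (B G : mat) : Prop :=
  (forall i, (i < n)%nat -> (z i < K)%nat) /\
  (forall k, (k < K)%nat -> (c k < L)%nat) /\
  (forall k k', 0 <= B k k' <= 1) /\
  (forall i l, (i < n)%nat -> (l < L)%nat -> 0 <= G i l <= 1) /\
  (forall i j, (i < n)%nat -> (j < n)%nat ->
     P i j = B (z i) (z j) * G i (c (z j)) * G j (c (z i))).

Lemma NBM_normalized (n K L : nat) (P : mat) :
  NBM n K L P -> exists z c B G, normalized_factorization n K L P z c B G.
Proof.
  intros [HP [z [c [B [H [Hz [Hc [_ [HH [_ HPeq]]]]]]]]]].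
  set (mx := block_max n z H).
  exists z, c, (fun k k' => B k k' * mx k (c k') * mx k' (c k)),
    (fun i l => if Rle_dec (mx (z i) l) 0 then 0 else H i l / mx (z i) l).
  refine (conj Hz (conj Hc (conj _ (conj _ _)))).
  - intros k k'.
    destruct (block_max_attained n z H k (c k')) as [E1|[i [Hi [<- Ei]]]].
    { fold mx in E1. rewrite E1, Rmult_0_r, Rmult_0_l. lra. }
    destruct (block_max_attained n z H k' (c (z i))) as [E2|[j [Hj [<- Ej]]]].
    { fold mx in E2. rewrite E2, Rmult_0_r. lra. }
    fold mx in Ei, Ej. rewrite <- Ei, <- Ej, <- HPeq by auto. apply HP; auto.
  - intros i l Hi Hl. destruct (Rle_dec (mx (z i) l) 0); [lra|].
    pose proof (HH i l Hi Hl). pose proof (block_max_ge n z H i l Hi). fold mx in H1.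
    split.
    + apply Rmult_le_pos; [auto | left; apply Rinv_0_lt_compat; lra].
    + apply (Rmult_le_reg_r (mx (z i) l)); [lra|].
      unfold Rdiv. rewrite Rmult_assoc, Rinv_l; lra.
  - intros i j Hi Hj. rewrite HPeq by auto.
    assert (Hl1 : (c (z j) < L)%nat) by (apply Hc, Hz; auto).
    assert (Hl2 : (c (z i) < L)%nat) by (apply Hc, Hz; auto).
    pose proof (block_max_ge n z H i (c (z j)) Hi).
    pose proof (block_max_ge n z H j (c (z i)) Hj).
    pose proof (HH i _ Hi Hl1). pose proof (HH j _ Hj Hl2). fold mx in H0, H1.
    destruct (Rle_dec (mx (z i) (c (z j))) 0).
    { replace (H i (c (z j))) with 0 by lra. ring. }
    destruct (Rle_dec (mx (z j) (c (z i))) 0).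
    { replace (H j (c (z i))) with 0 by lra. ring. }
    field. lra.
Qed.

(* [b] encodes the K x K matrix B as b (k * K + k'), [g] the n x L matrix G as
   g (i * L + l). *)
Definition nbm_of_params (K L : nat) (z c : nat -> nat) (b g : nat -> R) : mat :=
  fun i j => b (z i * K + z j)%nat * g (i * L + c (z j))%nat * g (j * L + c (z i))%nat.

Definition nbm_net (n K L m : nat) : list mat :=
  flat_map (fun z => flat_map (fun c => flat_map (fun b =>
    map (fun g => nbm_of_params K L z c b g) (all_funs (n * L) (grid m) 0))
    (all_funs (K * K) (grid m) 0)) (all_funs K (seq 0 L) 0%nat)) (all_funs n (seq 0 K) 0%nat).

Lemma length_nbm_net (n K L m : nat) :
  length (nbm_net n K L m) = (K ^ n * (L ^ K * (S m ^ (K * K) * S m ^ (n * L))))%nat.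
Proof.
  unfold nbm_net.
  rewrite (length_flat_map_const _ _ (L ^ K * (S m ^ (K * K) * S m ^ (n * L)))),
    length_all_funs, length_seq; [reflexivity|]. intros z.
  rewrite (length_flat_map_const _ _ (S m ^ (K * K) * S m ^ (n * L))),
    length_all_funs, length_seq; [reflexivity|]. intros c.
  rewrite (length_flat_map_const _ _ (S m ^ (n * L))), length_all_funs, length_grid;
    [reflexivity|]. intros b.
  rewrite length_map, length_all_funs, length_grid. reflexivity.
Qed.

Lemma nbm_net_approx (n K L m : nat) (P : mat) (z c : nat -> nat) (B G : mat) :
  (0 < m)%nat -> normalized_factorization n K L P z c B G ->
  exists M, In M (nbm_net n K L m) /\ frob_dist n P M <= INR n * (3 * / INR m).
Proof.
  intros Hm [Hz [Hc [HB [HG HP]]]].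
  destruct (all_funs_complete n (seq 0 K) 0%nat (fun i v => v = z i)) as [zz [Hzz Ezz]].
  { intros i Hi. exists (z i). split; auto. apply in_seq. specialize (Hz i Hi). lia. }
  destruct (all_funs_complete K (seq 0 L) 0%nat (fun k v => v = c k)) as [cc [Hcc Ecc]].
  { intros k Hk. exists (c k). split; auto. apply in_seq. specialize (Hc k Hk). lia. }
  destruct (all_funs_complete (K * K) (grid m) 0 (fun idx v => 0 <= v <= 1 /\
              Rabs (v - B (idx / K)%nat (idx mod K)%nat) <= / INR m)) as [bb [Hbb Ebb]].
  { intros idx _. apply grid_approx; auto. }
  destruct (all_funs_complete (n * L) (grid m) 0 (fun idx v => 0 <= v <= 1 /\
              Rabs (v - G (idx / L)%nat (idx mod L)%nat) <= / INR m)) as [gg [Hgg Egg]].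
  { intros idx Hidx. apply grid_approx, HG; auto.
    - apply Nat.Div0.div_lt_upper_bound; lia.
    - apply Nat.mod_upper_bound; lia. }
  exists (nbm_of_params K L zz cc bb gg). split.
  { apply in_flat_map. exists zz. split; auto. apply in_flat_map. exists cc. split; auto.
    apply in_flat_map. exists bb. split; auto. apply in_map_iff. exists gg. split; auto. }
  apply frob_dist_le_entrywise.
  { pose proof (Rinv_0_lt_compat _ (lt_0_INR _ Hm)). lra. }
  intros i j Hi Hj. unfold nbm_of_params.
  pose proof (Hz i Hi) as Hzi. pose proof (Hz j Hj) as Hzj.
  rewrite (Ezz i Hi), (Ezz j Hj), (Ecc _ Hzi), (Ecc _ Hzj), HP by auto.
  pose proof (Hc _ Hzi) as Hci. pose proof (Hc _ Hzj) as Hcj.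
  destruct (div_mod_pair (z i) (z j) K Hzj) as [D1 D2].
  destruct (div_mod_pair i (c (z j)) L Hcj) as [D3 D4].
  destruct (div_mod_pair j (c (z i)) L Hci) as [D5 D6].
  destruct (Ebb (z i * K + z j)%nat ltac:(nia)) as [Eb1 Eb2].
  destruct (Egg (i * L + c (z j))%nat ltac:(nia)) as [Eg1 Eg2].
  destruct (Egg (j * L + c (z i))%nat ltac:(nia)) as [Eg3 Eg4].
  rewrite D1, D2 in Eb2. rewrite D3, D4 in Eg2. rewrite D5, D6 in Eg4.
  apply Rabs_mul3_sub_le; auto; rewrite Rabs_minus_sym; auto.
Qed.

Lemma nbm_net_is_eps_net (n K L m : nat) (eps : R) :
  (0 < m)%nat -> 3 * INR n / INR m <= eps -> is_eps_net n eps (NBM n K L) (nbm_net n K L m).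
Proof.
  intros Hm Heps P HP.
  destruct (NBM_normalized n K L P HP) as [z [c [B [G HzcBG]]]].
  destruct (nbm_net_approx n K L m P z c B G Hm HzcBG) as [M [HM Hdist]].
  exists M. split; auto. unfold Rdiv in Heps. lra.
Qed.

Lemma mesh_choice (n L : nat) (eps : R) :
  (1 <= n)%nat -> (1 <= L)%nat -> 0 < eps <= 1 ->
  exists m, (0 < m)%nat /\ 3 * INR n / INR m <= eps /\ INR (S m) <= 9 * INR n * INR L / eps.
Proof.
  intros Hn HL Heps.
  assert (Hnr : 1 <= INR n) by (apply (le_INR 1); lia).
  assert (HLr : 1 <= INR L) by (apply (le_INR 1); lia).
  set (t := 3 * INR n / eps).
  assert (Hteps : t * eps = 3 * INR n) by (unfold t; field; lra).
  assert (Ht : 3 <= t) by nra.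
  destruct (INR_unbounded t) as [N HN].
  destruct (nat_floor_bracket N t) as [j [_ [Hj1 Hj2]]]; [lra|].
  exists (S j). rewrite !S_INR. split; [lia | split].
  - apply (Rmult_le_reg_r (INR j + 1)); [lra|].
    unfold Rdiv. rewrite Rmult_assoc, Rinv_l by lra. nra.
  - apply (Rmult_le_reg_r eps); [lra|].
    unfold Rdiv. rewrite Rmult_assoc, Rinv_l by lra. nra.
Qed.

Lemma ln_length_nbm_net_le (n K L m : nat) (X : R) :
  (1 <= L)%nat -> (1 <= K)%nat -> INR (S m) <= X ->
  ln (INR (length (nbm_net n K L m))) <=
    INR n * ln (INR K) + INR K * ln (INR L) + (INR K ^ 2 + 2 * INR n * INR L) * ln X.
Proof.
  intros HL HK HX.
  assert (HKr : 1 <= INR K) by (apply (le_INR 1); lia).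
  assert (HLr : 1 <= INR L) by (apply (le_INR 1); lia).
  assert (HM1 : 1 <= INR (S m)) by (apply (le_INR 1); lia).
  rewrite length_nbm_net, !mult_INR, !pow_INR.
  rewrite !ln_mult by (repeat apply Rmult_lt_0_compat; apply pow_lt; lra).
  rewrite !ln_pow, !mult_INR by lra.
  assert (HlnX : ln (INR (S m)) <= ln X) by (apply ln_le_compat; lra).
  assert (Hln0 : 0 <= ln (INR (S m))) by (rewrite <- ln_1; apply ln_le_compat; lra).
  assert (HnL : 0 <= INR n * INR L) by (pose proof (pos_INR n); nra).
  assert (0 <= INR K * INR K) by nra.
  assert (INR K * INR K * ln (INR (S m)) <= INR K * INR K * ln X)
    by (apply Rmult_le_compat_l; auto).
  assert (INR n * INR L * ln (INR (S m)) <= 2 * INR n * INR L * ln X) by nra.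
  replace (INR K ^ 2) with (INR K * INR K) by ring. lra.
Qed.

Theorem lemma3 (n K L : nat) (eps : R) :
  (1 <= L)%nat -> (L <= K)%nat -> (K <= n)%nat ->
  0 < eps -> eps <= 1 ->
  exists Y : list mat,
    is_eps_net n eps (NBM n K L) Y /\
    ln (INR (length Y)) <=
      INR n * ln (INR K) + INR K * ln (INR L)
      + (INR K ^ 2 + 2 * INR n * INR L) * ln (9 * INR n * INR L / eps).
Proof.
  intros HL HLK HKn He He1.
  destruct (mesh_choice n L eps) as [m [Hm [Hmesh Hsize]]]; [lia | lia | lra |].
  exists (nbm_net n K L m). split.
  - apply nbm_net_is_eps_net; auto.
  - apply ln_length_nbm_net_le; auto; lia.
Qed.
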